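(* Let $u=q/p$ and $v=s/r$ be positive rational numbers written in lowest terms, and let $\mathcal{T}_{u,v}$ be the triangle with vertices $(0,0)$, $(p/q,0)$ and $(0,r/s)$. If \[ s\mid p,\quad p\mid (rq+1),\quad \gcd\!\left(\frac{rq+1}{p},s\right)=1 \] and \[ q\mid r,\quad r\mid (sp+1),\quad \gcd\!\left(\frac{sp+1}{r},q\right)=1, \] then $\mathcal{T}_{u,v}$ is pseudo-integral, i.e. $t\mapsto \#(t\mathcal{T}_{u,v}\cap\mathbb{Z}^2)$ is a polynomial in the positive integer $t$. *)

From mathcomp Require Import all_boot all_order all_algebra.
Set Implicit Arguments. Unset Strict Implicit. Unset Printing Implicit Defensive.
Import Order.TTheory GRing.Theory Num.Theory.
Local Open Scope ring_scope.

(* The closed triangle T_{u,v} with vertices (0,0), (1/u,0), (0,1/v),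
   written as the intersection of its three half-planes:
   x >= 0, y >= 0, u x + v y <= 1. *)
Definition in_triangle (u v : rat) (x y : rat) : bool :=
  [&& 0 <= x, 0 <= y & x * u + y * v <= 1].

(* For t > 0, z in t T iff z / t in T. *)
Definition in_dilate (u v : rat) (t : nat) (x y : rat) : bool :=
  in_triangle u v (x / t%:R) (y / t%:R).

(* #(t T_{u,v} ∩ Z^2), for u = q/p and v = s/r with p, r > 0.
   Every lattice point of t T has 0 <= x <= t p / q <= t p and
   0 <= y <= t r / s <= t r (q, s >= 1), so enumerating the integer
   points with 0 <= x <= t p, 0 <= y <= t r is exhaustive. *)
Definition lattice_count (p q r s t : nat) : nat :=
  (\sum_(x < (t * p).+1) \sum_(y < (t * r).+1)
     in_dilate (q%:R / p%:R) (s%:R / r%:R) t (x%:R) (y%:R))%N.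

Definition pseudo_integral (p q r s : nat) : Prop :=
  exists P : {poly rat}, forall t : nat, (0 < t)%N ->
    (lattice_count p q r s t)%:R = P.[t%:R].

From mathcomp Require Import all_boot all_order all_algebra zify ring.
Set Implicit Arguments. Unset Strict Implicit. Unset Printing Implicit Defensive.
Import Order.TTheory GRing.Theory Num.Theory.

(* Sorting the lattice points (x, y) of t T by n = a x + b y, with a = q r,
   b = s p and n <= N = t p r, reduces the count to a sum over n of the number
   of representations of n by a and b.  Popoviciu's formula gives this number
   as (n - a X n - b Y n) / (a b) + 1, where X n < b and Y n < a solve
   a X n = n (mod b) and b Y n = n (mod a).  Hence the count is quadratic in t
   as soon as X and Y average exactly (b - 1) / 2 and (a - 1) / 2 over
   0 <= n <= N, which is not automatic since N is a multiple of p r only.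
   The hypotheses give q r = -1 (mod p) and s | p, so X n has low p-adic digit
   -n mod p and a high digit affine in n mod p and n / p; over each block of p
   consecutive n, the high digits run through full periods mod s, because the
   slope k = (q r + 1) / p is a unit mod s, up to a boundary term that
   telescopes.  The same argument with the roles swapped handles Y. *)

Lemma sum_ord_eqn (K v : nat) : \sum_(i < K) (i == v :> nat) = (v < K).
Proof.
elim: K => [|K IH]; first by rewrite big_ord0.
rewrite big_ord_recr /= IH ltnS [v <= K]leq_eqVlt.
by case: (ltngtP v K).
Qed.

Lemma double_sum_ord_id (n : nat) : 2 * \sum_(i < n) i = n * n.-1.
Proof.
elim: n => [|n IH]; first by rewrite big_ord0.
rewrite big_ord_recr /= mulnDr IH; case: n {IH} => //= n; lia.
Qed.

Lemma eqn_mod_coprimeM2l (a b x y : nat) : coprime a b ->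
  (a * x == a * y %[mod b]) = (x == y %[mod b]).
Proof.
move=> cab.
wlog le_yx : x y / y <= x.
  move=> H; case: (leqP y x) => [|/ltnW le_xy]; first exact: H.
  by rewrite eq_sym H // eq_sym.
rewrite !eqn_mod_dvd ?leq_mul2l ?le_yx ?orbT // -mulnBr Gauss_dvdr //.
by rewrite coprime_sym.
Qed.

Lemma sum_modn_affine (s c d : nat) : 0 < s -> coprime d s ->
  \sum_(e < s) ((c + d * e) %% s) = \sum_(e < s) e.
Proof.
move=> s_gt0 cds.
pose h (i : 'I_s) : 'I_s := Ordinal (ltn_pmod (c + d * i) s_gt0).
have h_inj : injective h.
  move=> i j /(congr1 val) /eqP /=.
  rewrite eqn_modDl eqn_mod_coprimeM2l // !modn_small // => /eqP.
  exact: val_inj.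
by rewrite [RHS](reindex_inj h_inj).
Qed.

Lemma sum_periodic (f : nat -> nat) (s a n : nat) : n = a * s ->
  (forall e, f (s + e) = f e) -> \sum_(e < n) f e = a * \sum_(e < s) f e.
Proof.
move=> -> f_per; elim: a => [|a IH]; first by rewrite mul0n big_ord0.
rewrite mulSn big_split_ord /= [in RHS]mulSn -IH; congr (_ + _).
by apply: eq_bigr => i _; rewrite f_per.
Qed.

Lemma sum_modn_eq (b X K : nat) : X < b ->
  \sum_(x < K) (x %% b == X) = (K + b.-1 - X) %/ b.
Proof.
move=> ltXb; have b_gt0 : 0 < b by case: b ltXb.
elim: K => [|K IH].
  by rewrite big_ord0 add0n divn_small // ltn_subLR; lia.
rewrite big_ord_recr /= IH.
have -> : K.+1 + b.-1 - X = (K + b.-1 - X).+1 by lia.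
rewrite divnS // addnC; congr (_ + _).
have -> : (K + b.-1 - X).+1 = K + (b - X) by lia.
rewrite /dvdn -(modn_small ltXb) -/(K == X %[mod b]).
by rewrite -(eqn_modDr (b - X)) subnKC ?(ltnW ltXb) // modnn (modn_small ltXb).
Qed.

Lemma sum_leq_modn_eq (b X K m : nat) : X < b -> m < K ->
  \sum_(x < K) ((x <= m) && (x %% b == X)) = (m + b - X) %/ b.
Proof.
move=> ltXb ltmK; have b_gt0 : 0 < b by case: b ltXb.
have := sum_modn_eq m.+1 ltXb.
rewrite (big_ord_widen _ (fun x => (x %% b == X) : nat) ltmK) big_mkcond /=.
have -> : m.+1 + b.-1 - X = m + b - X by lia.
by move=> <-; apply: eq_bigr => i _; rewrite ltnS; case: (i <= m).
Qed.

Section Popoviciu.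

Variables (al be : nat).
Hypotheses (al_gt0 : 0 < al) (be_gt0 : 0 < be) (co_al_be : coprime al be).

Lemma popoviciu_identity (n X Y : nat) :
  X < be -> al * X = n %[mod be] -> Y < al -> be * Y = n %[mod al] ->
  al * be * ((n %/ al + be - X) %/ be) + al * X + be * Y = n + al * be.
Proof.
move=> ltXbe alX ltYal beY.
set m := n %/ al; set rho := n %% al; set w := m + be - X.
set C := w %/ be; set sg := w %% be.
have n_eq : n = m * al + rho by rewrite /m /rho -divn_eq.
have w_eq : w = C * be + sg by rewrite /C /sg -divn_eq.
have lt_rho : rho < al by rewrite ltn_mod.
have lt_sg : sg < be by rewrite ltn_mod.
have sum_eq : rho + al * sg + al * X + al * be * C = n + al * be.
  have : al * w + al * X = al * m + al * be.
    by rewrite -!mulnDr /w; congr (_ * _); lia.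
  rewrite w_eq mulnDr [C * be]mulnC mulnA; lia.
suff : rho + al * sg = be * Y by lia.
have lt_lhs : rho + al * sg < al * be.
  have : al * sg <= al * be.-1 by rewrite leq_mul2l; lia.
  have : al * be.-1 + al = al * be by rewrite -mulnSr prednK.
  lia.
have lt_rhs : be * Y < al * be by rewrite mulnC ltn_mul2r ltYal be_gt0.
rewrite -(modn_small lt_lhs) -(modn_small lt_rhs); apply/eqP.
rewrite chinese_remainder //; apply/andP; split.
  by rewrite beY addnC mulnC modnMDl /rho modn_mod.
rewrite modnMr -(mod0n be) -(eqn_modDr n) add0n.
have alX_C : al * X + al * be * C = n %[mod be].
  by rewrite -modnDmr (mulnAC al be C) modnMl addn0.
by rewrite -modnDmr -{1}alX_C modnDmr !addnA sum_eq -modnDmr modnMl addn0.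
Qed.

Lemma sum_eqn_affine (c n K : nat) :
  (forall y, c + be * y = n -> y < K) ->
  \sum_(y < K) (n == c + be * y) = (c <= n) && (be %| n - c).
Proof.
move=> boundK.
case: (boolP ((c <= n) && (be %| n - c))) => [/andP [le_cn dvd_be] | Hn].
  set y0 := (n - c) %/ be.
  have y0_eq : c + be * y0 = n by rewrite /y0 mulnC divnK // subnKC.
  rewrite (eq_bigr (fun y : 'I_K => (y == y0 :> nat) : nat)) => [|y _].
    by rewrite sum_ord_eqn boundK.
  by rewrite -{1}y0_eq eqn_add2l eqn_pmul2l // eq_sym.
rewrite big1 // => y _; apply/eqP; rewrite eqb0; apply/negP => /eqP n_eq.
by move: Hn; rewrite n_eq leq_addr addnC addnK dvdn_mulr.
Qed.

Lemma solvable_affineE (n x X : nat) : X < be -> al * X = n %[mod be] ->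
  (al * x <= n) && (be %| n - al * x) = (x <= n %/ al) && (x %% be == X).
Proof.
move=> ltXbe alX.
rewrite leq_divRL // [x * al]mulnC.
case: (boolP (al * x <= n)) => //= le_n.
by rewrite -eqn_mod_dvd // -alX eqn_mod_coprimeM2l // (modn_small ltXbe) eq_sym.
Qed.

End Popoviciu.

Lemma in_dilate_nat (p q r s t x y : nat) : 0 < p -> 0 < r -> 0 < t ->
  in_dilate (q%:R / p%:R) (s%:R / r%:R) t x%:R y%:R =
  (q * r * x + s * p * y <= t * (p * r)).
Proof.
move=> p_gt0 r_gt0 t_gt0; rewrite /in_dilate /in_triangle.
rewrite !divr_ge0 ?ler0n //=.
have -> : (x%:R / t%:R * (q%:R / p%:R) + y%:R / t%:R * (s%:R / r%:R) =
   (q * r * x + s * p * y)%:R / (t * (p * r))%:R :> rat)%R.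
  by rewrite !natrD !natrM; field; rewrite !pnatr_eq0 -!lt0n p_gt0 r_gt0 t_gt0.
by rewrite ler_pdivrMr ?ltr0n ?muln_gt0 ?p_gt0 ?r_gt0 ?t_gt0 // mul1r ler_nat.
Qed.

Section LatticeCount.

Variables (p q r s t : nat).
Hypotheses (p_gt0 : 0 < p) (q_gt0 : 0 < q) (r_gt0 : 0 < r) (s_gt0 : 0 < s).
Hypotheses (t_gt0 : 0 < t) (co_qr_sp : coprime (q * r) (s * p)).
Variables (X Y : nat -> nat).
Hypotheses (ltX : forall n, X n < s * p) (ltY : forall n, Y n < q * r).
Hypothesis X_mod : forall n, q * r * X n = n %[mod s * p].
Hypothesis Y_mod : forall n, s * p * Y n = n %[mod q * r].

Let N := t * (p * r).

Lemma lattice_count_sum_reps : lattice_count p q r s t =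
  \sum_(n < N.+1) ((n %/ (q * r) + s * p - X n) %/ (s * p)).
Proof.
rewrite /lattice_count.
under eq_bigr => x _ do under eq_bigr => y _ do
  rewrite in_dilate_nat // -ltnS -sum_ord_eqn.
under eq_bigr => x _ do rewrite exchange_big.
rewrite exchange_big; apply: eq_bigr => n _.
have le_nN : n <= N by rewrite -ltnS.
rewrite (eq_bigr (fun x : 'I_(t * p).+1 =>
   ((q * r * x <= n) && (s * p %| n - q * r * x)) : nat)) => [|x _]; last first.
  apply: sum_eqn_affine; first by rewrite muln_gt0 s_gt0.
  move=> y y_eq; rewrite ltnS -(leq_pmul2l p_gt0).
  apply: leq_trans (leq_pmull _ s_gt0) _.
  have : s * p * y <= N by rewrite -y_eq in le_nN; lia.
  by rewrite /N; lia.
have qr_gt0 : 0 < q * r by rewrite muln_gt0 q_gt0.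
under eq_bigr => x _ do rewrite (solvable_affineE qr_gt0 co_qr_sp _ (ltX n) (X_mod n)).
by apply: sum_leq_modn_eq => //; rewrite ltnS; nia.
Qed.

Lemma lattice_count_residue_sums :
  q * r * (s * p) * lattice_count p q r s t
    + q * r * \sum_(n < N.+1) X n + s * p * \sum_(n < N.+1) Y n
  = \sum_(n < N.+1) n + N.+1 * (q * r * (s * p)).
Proof.
rewrite lattice_count_sum_reps !big_distrr -!big_split /=.
rewrite (eq_bigr (fun n : 'I_N.+1 => n + q * r * (s * p))) => [|n _].
  by rewrite big_split sum_nat_const card_ord.
apply: popoviciu_identity; rewrite ?muln_gt0 ?q_gt0 ?s_gt0 //.
Qed.

End LatticeCount.

Definition oppn_mod (S m : nat) : nat := (S.-1 * m) %% S.

Section OppnMod.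

Variable S : nat.
Hypothesis S_gt0 : 0 < S.

Lemma oppn_mod_lt m : oppn_mod S m < S.
Proof. by rewrite ltn_mod. Qed.

Lemma oppn_mod_add m : oppn_mod S m + m %% S = S * (0 < m %% S).
Proof.
have sum_mod0 : (oppn_mod S m + m %% S) %% S = 0.
  by rewrite /oppn_mod modnDm -mulSnr prednK // modnMr.
have := oppn_mod_lt m; have : m %% S < S by rewrite ltn_mod.
case: (posnP (m %% S)) => [m0 _ lt_oS | m_gt0 lt_mS lt_oS].
  by rewrite m0 addn0 modn_small // in sum_mod0; rewrite m0 sum_mod0 muln0.
rewrite muln1.
move: (divn_eq (oppn_mod S m + m %% S) S); rewrite sum_mod0 addn0.
case: (_ %/ S) => [|[|q]]; nia.
Qed.

Lemma sum_oppn_mod_affine c d : coprime d S ->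
  \sum_(e < S) oppn_mod S (c + d * e) = \sum_(e < S) e.
Proof.
move=> co_dS; rewrite -(sum_modn_affine (S.-1 * c) S_gt0 (_ : coprime (S.-1 * d) S)).
  by apply: eq_bigr => e _; rewrite /oppn_mod mulnDr mulnA.
by rewrite coprimeMl coprimePn.
Qed.

End OppnMod.

(* With e = n %% P, the solution X of (k P - 1) X = n (mod S P) has P-adic
   digits -e and -([e > 0] + n %/ P + k e), taken mod P and mod S. *)
Definition inv_residue (P S k n : nat) : nat :=
  oppn_mod P n + P * oppn_mod S ((0 < n %% P) + n %/ P + k * (n %% P)).

Lemma inv_residue_identity (T : comRingType) (QR e e' i m n z j w a k P S : T) :
  (QR + 1 = k * P -> e' + e = P * i -> n = m * P + e -> j + S * w = z ->
  z + (i + m + k * e) = S * (i + m + k * e) -> P = a * S ->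
  QR * (e' + P * j) + S * P * (i + m + k * e) =
    n + S * P * (k * a * i + k * a * j + w))%R.
Proof.
set c := (i + m + k * e)%R => QRk e'e nE zE zS PE.
have -> : QR = (k * P - 1)%R by rewrite -QRk addrK.
have -> : e' = (P * i - e)%R by rewrite -e'e addrK.
have -> : j = (z - S * w)%R by rewrite -zE addrK.
have -> : z = (S * c - c)%R by rewrite -zS addrK.
by rewrite nE PE /c; ring.
Qed.

Section InverseResidue.

Variables (P S k : nat).
Hypotheses (P_gt0 : 0 < P) (S_gt0 : 0 < S).

Lemma inv_residue_lt n : inv_residue P S k n < S * P.
Proof.
rewrite /inv_residue.
have := oppn_mod_lt P_gt0 n.
have := oppn_mod_lt S_gt0 ((0 < n %% P) + n %/ P + k * (n %% P)).
set e := oppn_mod P n; set j := oppn_mod S _ => lt_jS lt_eP.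
have : P * j <= P * S.-1 by rewrite leq_mul2l; lia.
have : P * S.-1 + P = S * P by rewrite -mulnSr prednK // mulnC.
lia.
Qed.

Hypothesis S_dvd_P : S %| P.

Lemma inv_residue_mod Q R n : Q * R + 1 = k * P ->
  Q * R * inv_residue P S k n = n %[mod S * P].
Proof.
move=> QRk; rewrite /inv_residue.
set e := n %% P; set m := n %/ P; set i := 0 < e.
set e' := oppn_mod P n; set z := S.-1 * (i + m + k * e).
set j := z %% S; set w := z %/ S; set a := P %/ S.
have e'_eq : e' + e = P * i by apply: oppn_mod_add.
have n_eq : n = m * P + e by rewrite /m /e -divn_eq.
have z_eq : j + S * w = z by rewrite /j /w addnC mulnC -divn_eq.
have zS : z + (i + m + k * e) = S * (i + m + k * e).
  by rewrite /z [LHS]addnC -mulSn prednK.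
have P_eq : P = a * S by rewrite /a divnK.
have expand : Q * R * (e' + P * j) + S * P * (i + m + k * e) =
              n + S * P * (k * a * i + k * a * j + w).
  have toZ x y : x = y -> (x%:R = y%:R :> int)%R by move->.
  move: QRk e'_eq n_eq z_eq zS P_eq.
  move=> /toZ + /toZ + /toZ + /toZ + /toZ + /toZ; rewrite !(natrD, natrM) => *.
  apply/eqP; rewrite -(eqr_nat int) !(natrD, natrM); apply/eqP.
  by apply: inv_residue_identity; eassumption.
move/(congr1 (modn^~ (S * P))): expand.
by rewrite addnC [S * P * _]mulnC modnMDl [n + _]addnC [S * P * _]mulnC modnMDl.
Qed.

Hypothesis co_kS : coprime k S.

Lemma sum_inv_residue_block m :
  2 * \sum_(e < P) inv_residue P S k (m * P + e) + 2 * P * oppn_mod S m.+1 =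
  P * (P * S).-1 + 2 * P * oppn_mod S m.
Proof.
pose high e := oppn_mod S ((0 < e) + m + k * e).
have digits e : e < P ->
    inv_residue P S k (m * P + e) = oppn_mod P (m * P + e) + P * high e.
  move=> lt_eP; rewrite /inv_residue modnMDl divnMDl //.
  by rewrite (modn_small lt_eP) (divn_small lt_eP) addn0.
under eq_bigr => e _ do rewrite digits //.
rewrite big_split /= -big_distrr /=.
have low_sum : \sum_(e < P) oppn_mod P (m * P + e) = \sum_(e < P) e.
  rewrite -(sum_oppn_mod_affine P_gt0 (m * P) (coprime1n P)).
  by apply: eq_bigr => e; rewrite mul1n.
have P_eq : P = P %/ S * S by rewrite divnK.
have shifted_sum : \sum_(e < P) oppn_mod S (m.+1 + k * e) = P %/ S * \sum_(e < S) e.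
  rewrite (@sum_periodic (fun e => oppn_mod S (m.+1 + k * e)) S _ P P_eq) => [|e].
    by rewrite sum_oppn_mod_affine.
  rewrite /oppn_mod (_ : S.-1 * (m.+1 + k * (S + e)) = S.-1 * k * S + S.-1 * (m.+1 + k * e)).
    by rewrite modnMDl.
  by ring.
(* The high digits follow the shifted sum except at e = 0, where the term is
   oppn_mod S m instead of oppn_mod S m.+1. *)
have high_sum :
    \sum_(e < P) high e + oppn_mod S m.+1 = P %/ S * \sum_(e < S) e + oppn_mod S m.
  rewrite -shifted_sum -(prednK P_gt0) !big_ord_recl.
  rewrite (_ : high 0 = oppn_mod S m); last by rewrite /high muln0 addn0.
  rewrite (eq_bigr (fun i : 'I_P.-1 => oppn_mod S (m.+1 + k * bump 0 i))) // muln0 addn0; lia.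
have prednM : P.-1 + P * S.-1 = (P * S).-1.
  have : P <= P * S by rewrite leq_pmulr.
  rewrite -!subn1 mulnBr muln1; lia.
rewrite low_sum -prednM [in RHS]mulnDr -double_sum_ord_id.
have -> : 2 * (\sum_(e < P) e + P * \sum_(e < P) high e) + 2 * P * oppn_mod S m.+1 =
          2 * \sum_(e < P) e + 2 * P * (\sum_(e < P) high e + oppn_mod S m.+1) by ring.
rewrite high_sum mulnDr -addnA; congr (_ + (_ + _)).
have -> : 2 * P * (P %/ S * \sum_(e < S) e) = P * (P %/ S * (2 * \sum_(e < S) e)).
  by ring.
by rewrite double_sum_ord_id [P %/ S * _]mulnA -P_eq.
Qed.

Lemma sum_inv_residue T :
  2 * \sum_(n < (T * P).+1) inv_residue P S k n = T * P * (P * S).-1.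
Proof.
have telescope T' :
    2 * \sum_(n < T' * P) inv_residue P S k n + 2 * P * oppn_mod S T' =
    T' * (P * (P * S).-1).
  elim: T' => [|T' IH]; first by rewrite mul0n big_ord0 /oppn_mod !muln0 mod0n muln0.
  rewrite [T'.+1 * P]mulSnr big_split_ord [RHS]mulSn.
  move: IH (sum_inv_residue_block T').
  set A := \sum_(i < T' * P) _; set B := \sum_(i < P) _ => /=; lia.
rewrite big_ord_recr /=.
have -> : inv_residue P S k (T * P) = P * oppn_mod S T.
  by rewrite /inv_residue /oppn_mod modnMl mulnK // muln0 addn0 mulnA modnMl.
by rewrite -mulnA -telescope; ring.
Qed.

End InverseResidue.

Definition triangle_poly (p q r s : nat) : {poly rat} :=
  ((2 * q * s)%:R^-1 *: ((p * r)%:R *: 'X^2 + (1 + q * r + s * p)%:R *: 'X) + 1)%R.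

Section ClosedForm.

Variables (p q r s k k' : nat).
Hypotheses (p_gt0 : 0 < p) (q_gt0 : 0 < q) (r_gt0 : 0 < r) (s_gt0 : 0 < s).
Hypotheses (s_dvd_p : s %| p) (q_dvd_r : q %| r).
Hypotheses (qr_inv : q * r + 1 = k * p) (sp_inv : s * p + 1 = k' * r).
Hypotheses (co_ks : coprime k s) (co_k'q : coprime k' q).
Hypothesis co_qr_sp : coprime (q * r) (s * p).

Lemma double_lattice_count t : 0 < t ->
  2 * (q * r) * (s * p) * lattice_count p q r s t =
  t * (p * r) * (t * (p * r)) + t * (p * r) * (1 + q * r + s * p)
    + 2 * (q * r) * (s * p).
Proof.
move=> t_gt0; set N := t * (p * r).
have := lattice_count_residue_sums p_gt0 q_gt0 r_gt0 s_gt0 t_gt0 co_qr_sp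
  (inv_residue_lt k p_gt0 s_gt0) (inv_residue_lt k' r_gt0 q_gt0)
  (fun n => inv_residue_mod p_gt0 s_gt0 s_dvd_p n qr_inv)
  (fun n => inv_residue_mod r_gt0 q_gt0 q_dvd_r n sp_inv).
have sumX : 2 * \sum_(n < N.+1) inv_residue p s k n + N = N * (s * p).
  rewrite (_ : N = t * r * p); last by rewrite /N; ring.
  by rewrite sum_inv_residue // -mulnSr prednK ?muln_gt0 ?p_gt0 // [p * s]mulnC.
have sumY : 2 * \sum_(n < N.+1) inv_residue r q k' n + N = N * (q * r).
  rewrite (_ : N = t * p * r); last by rewrite /N; ring.
  by rewrite sum_inv_residue // -mulnSr prednK ?muln_gt0 ?r_gt0 // [r * q]mulnC.
have sumN : 2 * \sum_(n < N.+1) n = N.+1 * N by rewrite double_sum_ord_id.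
rewrite -/N => sums.
move: sums sumX sumY sumN.
set L := lattice_count _ _ _ _ _.
set SX := \sum_(n < N.+1) _; set SY := \sum_(n < N.+1) _; set Sn := \sum_(n < N.+1) _.
clearbody L SX SY Sn N.
move: (q * r) (s * p) => al be e1 e2 e3 e4.
have := congr1 (muln 2) e1; have := congr1 (muln al) e2; have := congr1 (muln be) e3.
rewrite !mulnDr; nia.
Qed.

Lemma lattice_count_poly t : 0 < t ->
  ((lattice_count p q r s t)%:R = (triangle_poly p q r s).[t%:R])%R.
Proof.
move=> t_gt0.
have ne0 n : 0 < n -> (n%:R != 0 :> rat)%R by rewrite pnatr_eq0 -lt0n.
have cnz : ((2 * (q * r) * (s * p))%:R != 0 :> rat)%R.
  by rewrite ne0 // !muln_gt0 p_gt0 q_gt0 r_gt0 s_gt0.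
apply: (mulfI cnz); rewrite -natrM double_lattice_count //.
rewrite /triangle_poly !hornerE /= !(natrD, natrM, natrX).
by field; rewrite ?ne0.
Qed.

End ClosedForm.

Theorem corollary1p5 (p q r s : nat)
  (hp : (0 < p)%N) (hq : (0 < q)%N) (hr : (0 < r)%N) (hs : (0 < s)%N)
  (hqp : coprime q p) (hsr : coprime s r)
  (h1 : (s %| p)%N) (h2 : (p %| r * q + 1)%N)
  (h3 : coprime ((r * q + 1) %/ p) s)
  (h4 : (q %| r)%N) (h5 : (r %| s * p + 1)%N)
  (h6 : coprime ((s * p + 1) %/ r) q) :
  pseudo_integral p q r s.
Proof.
have qr_inv : q * r + 1 = (r * q + 1) %/ p * p by rewrite divnK // mulnC.
have sp_inv : s * p + 1 = (s * p + 1) %/ r * r by rewrite divnK.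
have co_pr : coprime p r by apply: coprime_dvdr h5 _; rewrite /coprime gcdnMDl gcdn1.
have co_qs : coprime q s by rewrite coprime_sym (coprime_dvdr h4 hsr).
have co_qr_sp : coprime (q * r) (s * p).
  by rewrite coprimeMl !coprimeMr co_qs hqp coprime_sym hsr coprime_sym co_pr.
exists (triangle_poly p q r s) => t t_gt0.
exact: (lattice_count_poly hp hq hr hs h1 h4 qr_inv sp_inv h3 h6 co_qr_sp t_gt0).
Qed.
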